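(* Let $E$ be a congruence on $\overline{\boldsymbol{T}(X_1,\ldots,X_n)}$. If there exist $f\in\overline{\boldsymbol{T}(X_1,\ldots,X_n)}\setminus\{-\infty\}$ and $t\in\boldsymbol{T}\setminus\{0\}$ such that $(f,f\odot t)\in E$, then $\boldsymbol{V}(E)=\varnothing$.
   Context: $\boldsymbol{T}=\mathbb{R}\cup\{-\infty\}$ with $a\oplus b=\max\{a,b\}$, $a\odot b=a+b$. $\overline{\boldsymbol{T}(X_1,\ldots,X_n)}$ is the semifield of fractions of the tropical polynomial function semiring (tropical polynomials modulo equality as functions $\boldsymbol{T}^n\to\boldsymbol{T}$); each element defines a function $\mathbb{R}^n\to\boldsymbol{T}$ (quotients evaluated as differences), non-$(-\infty)$ elements being real valued. A congruence is an equivalence relation compatible with both operations; $\boldsymbol{V}(E)=\{x\in\mathbb{R}^n\mid f(x)=g(x)\ \forall(f,g)\in E\}$. *)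

From HB Require Import structures.
From mathcomp Require Import all_boot all_order all_algebra.
From mathcomp Require Import reals.
Set Implicit Arguments. Unset Strict Implicit. Unset Printing Implicit Defensive.
Import Order.TTheory GRing.Theory Num.Theory.
Local Open Scope ring_scope.

Section Trop.
Variables (R : realType) (n : nat).

(* The tropical semifield T = R u {-oo}: None encodes -oo, Some r the real r. *)
Definition trop := option R.

Definition pt := 'rV[R]_n.

(* A tropical monomial c (.) X^e, evaluated at x: c + <e, x>. *)
Definition tmono := (R * {ffun 'I_n -> nat})%type.
Definition tmono_eval (m : tmono) (x : pt) : R :=
  m.1 + \sum_(i < n) ((m.2 i)%:R * x ord0 i).

(* A tropical polynomial different from -oo: a nonempty finite list of
   monomials (head, tail); its function on R^n is the max of the monomials,
   which is real valued. *)
Definition tpoly := (tmono * seq tmono)%type.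
Definition tpoly_eval (p : tpoly) (x : pt) : R :=
  foldr (fun m acc => Num.max (tmono_eval m x) acc) (tmono_eval p.1 x) p.2.

(* Raw functions R^n -> T that are either constantly -oo (None) or real
   valued (Some h).  Elements of the semifield of fractions are identified
   with the functions they define (tropical polynomials are taken modulo
   equality as functions). *)
Definition tfun := option (pt -> R).

(* Membership in the semifield of fractions  bar T(X_1..X_n):
   -oo, or a quotient P/Q of nonzero tropical polynomials, i.e. P - Q. *)
Definition in_sf (f : tfun) : Prop :=
  match f with
  | None => True
  | Some h => exists P Q : tpoly, forall x, h x = tpoly_eval P x - tpoly_eval Q x
  end.

Definition tadd (f g : tfun) : tfun :=
  match f, g with
  | None, _ => g
  | _, None => f
  | Some a, Some b => Some (fun x => Num.max (a x) (b x))
  end.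
Definition tmul (f g : tfun) : tfun :=
  match f, g with
  | Some a, Some b => Some (fun x => a x + b x)
  | _, _ => None
  end.

Definition tconst (t : trop) : tfun :=
  match t with None => None | Some c => Some (fun _ => c) end.

Definition tev (f : tfun) (x : pt) : trop :=
  match f with None => None | Some h => Some (h x) end.

Definition congruence (E : tfun -> tfun -> Prop) : Prop :=
  [/\ (forall f g, E f g -> in_sf f /\ in_sf g),
      (forall f, in_sf f -> E f f),
      (forall f g, E f g -> E g f),
      (forall f g h, E f g -> E g h -> E f h) &
      (forall a b c d, E a b -> E c d -> E (tadd a c) (tadd b d) /\ E (tmul a c) (tmul b d))].

Definition tV (E : tfun -> tfun -> Prop) (x : pt) : Prop :=
  forall f g, E f g -> tev f x = tev g x.

End Trop.

From HB Require Import structures.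
From mathcomp Require Import all_boot all_order all_algebra.
From mathcomp Require Import reals.
Set Implicit Arguments. Unset Strict Implicit. Unset Printing Implicit Defensive.
Import GRing.Theory.
Local Open Scope ring_scope.

(* A real valued f never agrees with f (.) t when t <> 0: if t is real,
   f(x) = f(x) + t forces t = 0, and if t = -oo then f (.) t = -oo. So the
   single pair (f, f (.) t) already has an empty variety, and V(E) is
   contained in it. *)

Lemma tev_neq_tmul_tconst (R : realType) (n : nat) (f : tfun R n) (t : trop R)
    (x : pt R n) :
  f <> None -> t <> Some 0 -> tev f x <> tev (tmul f (tconst n t)) x.
Proof.
case: f => [h|] // _; case: t => [c|] t0 //= [].
by rewrite -{1}[h x]addr0 => /addrI c0; apply: t0; rewrite -c0.
Qed.

Lemma not_tV_of_pair (R : realType) (n : nat) (E : tfun R n -> tfun R n -> Prop)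
    (f g : tfun R n) (x : pt R n) :
  E f g -> tev f x <> tev g x -> ~ tV E x.
Proof. by move=> Efg fg_neq /(_ f g Efg). Qed.

Theorem lemma3p6 (R : realType) (n : nat) (E : tfun R n -> tfun R n -> Prop) :
  congruence E ->
  (exists (f : tfun R n) (t : trop R),
      in_sf f /\ f <> None /\ t <> Some 0 /\ E f (tmul f (tconst n t))) ->
  forall x : pt R n, ~ tV E x.
Proof.
move=> _ [f [t [_ [f_real [t_neq0 Eft]]]]] x.
exact: (not_tV_of_pair Eft (tev_neq_tmul_tconst (x := x) f_real t_neq0)).
Qed.
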